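(* Let $L\ge 1$, $N=2^L$, and let $\mathbb{F}_q$ be a finite field of odd characteristic. For $i\in\{1,\ldots,L\}$ let $\mathbf{V}_i$ be the $N\times\frac{N}{2}$ matrix whose columns are the elements of $\mathcal{V}_i=\left\{\prod_{s=1,s\ne i}^{L}\mathbf{X}_s^{x_s}\mathbf{w} : x_s\in\{0,1\}\right\}$. Then for any $i,j\in\{1,\ldots,L\}$, $$\mathrm{rank}\big([\mathbf{V}_i\ \ \mathbf{X}_j\mathbf{V}_i]\big)=\big|\mathcal{L}(\mathbf{V}_i)\cup\mathcal{L}(\mathbf{X}_j\mathbf{V}_i)\big|=\begin{cases}N,& i=j,\\ \frac{N}{2},& i\ne j.\end{cases}$$
   Context: $\mathbf{X}_s=\mathbf{I}_{2^{s-1}}\otimes\mathrm{blkdiag}\big(\mathbf{I}_{N/2^s},-\mathbf{I}_{N/2^s}\big)$ for $s\in\{1,\ldots,L\}$ (diagonal $N\times N$ with entries $\pm1$, so $\mathbf{X}_s^2=\mathbf{I}_N$ and the $\mathbf{X}_s$ commute); $\mathbf{w}$ is the all-ones vector of length $N$. Lattice representation: every matrix whose columns are vectors of the form $\prod_{s=1}^L\mathbf{X}_s^{x_s}\mathbf{w}$ with $(x_1,\ldots,x_L)\in\{0,1\}^L$ is mapped by $\mathcal{L}$ to the set of exponent vectors $(x_1,\ldots,x_L)$ of its columns (exponents taken mod $2$, since $\mathbf{X}_s^2=\mathbf{I}_N$). Thus $\mathcal{L}(\mathbf{X}_j\mathbf{V}_i)=\{x+e_j \bmod 2 : x\in\mathcal{L}(\mathbf{V}_i)\}$,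 with $e_j$ the $j$-th unit vector. *)

From HB Require Import structures.
From mathcomp Require Import all_boot all_order all_algebra all_field.
Set Implicit Arguments. Unset Strict Implicit. Unset Printing Implicit Defensive.
Import GRing.Theory Num.Theory.
Local Open Scope ring_scope.

(* Indices s : 'I_L are 0-based: X L s stands for the paper's X_{s+1}. *)
Section Defs.
Variable F : fieldType.

(* X_{s+1} = I_{2^s} (x) blkdiag(I_{N/2^{s+1}}, -I_{N/2^{s+1}}), N = 2^L:
   row r lies in a diagonal block of size 2b (b = N/2^{s+1}); its sign is -1
   iff r lies in the second half of that block. *)
Definition Xmx (L : nat) (s : 'I_L) : 'M[F]_(2 ^ L) :=
  let b := (2 ^ L %/ 2 ^ s.+1)%N in
  \matrix_(r, c) (if r == c then (if (b <= r %% (2 * b))%N then -1 else 1) else 0).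

Definition wvec (L : nat) : 'cV[F]_(2 ^ L) := const_mx 1.

Definition colvec (L : nat) (x : {ffun 'I_L -> bool}) : 'cV[F]_(2 ^ L) :=
  (\big[mulmx/1%:M]_(s < L) (if x s then Xmx s else 1%:M)) *m wvec L.

Definition lattice (L m : nat) (A : 'M[F]_(2 ^ L, m)) : {set {ffun 'I_L -> bool}} :=
  [set x | [exists c : 'I_m, col c A == colvec x]].

Definition mx_of_exps (L m : nat) (e : 'I_m -> {ffun 'I_L -> bool}) : 'M[F]_(2 ^ L, m) :=
  \matrix_(r, c) colvec (e c) r ord0.
End Defs.

(* The column prod_s X_s^{x_s} w is the vector r |-> chi_x(r) = prod_s (-1)^(x_s b_s(r)),
   where b_s(r) is a binary digit of the row index r: a character of (Z/2)^L.  For x <> y,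
   pairing each r with the index differing from it in one digit where x and y differ shows
   that sum_r chi_x(r) chi_y(r) = 0, since 2 <> 0 in F.  So distinct such columns have Gram
   matrix N I and are independent, and the rank of any matrix built from such columns is the
   number of distinct exponent vectors, i.e. the size of its lattice representation.
   Multiplying by X_j flips x_j, so the lattice of [V_i  X_j V_i] is {x_i = 0} together
   with its image under flipping x_j: everything if i = j, and {x_i = 0} itself otherwise. *)

From HB Require Import structures.
From mathcomp Require Import all_boot all_order all_algebra all_field zify.
Import GRing.Theory.

Set Implicit Arguments.
Unset Strict Implicit.
Unset Printing Implicit Defensive.

Section Bits.

Definition bit k r := odd (r %/ 2 ^ k).

Lemma bitE k r : bit k r = (2 ^ k <= r %% 2 ^ k.+1).
Proof.
rewrite /bit expnS.
have hP : 0 < 2 ^ k by rewrite expn_gt0.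
set P := 2 ^ k in hP *.
have hu : r %% P < P by rewrite ltn_mod.
have er : r = r %/ P %/ 2 * (2 * P) + (r %/ P %% 2 * P + r %% P).
  by rewrite {1}(divn_eq r P) {1}(divn_eq (r %/ P) 2); lia.
rewrite [in RHS]er modnMDl modn_small modn2; case: (odd _) => /=; lia.
Qed.

Lemma bit_addX k r : bit k (r + 2 ^ k) = ~~ bit k r.
Proof. by rewrite /bit addnC -{1}(mul1n (2 ^ k)) divnMDl ?expn_gt0 // oddD. Qed.

Lemma bit_addX_neq k m r : m != k -> ~~ bit k r -> bit m (r + 2 ^ k) = bit m r.
Proof.
rewrite /bit => /negPf hmk /negPf h.
case: (ltngtP m k) hmk => // hm _.
- have -> : 2 ^ k = 2 ^ (k - m) * 2 ^ m by rewrite -expnD subnK // ltnW.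
  by rewrite addnC divnMDl ?expn_gt0 // oddD oddX subn_eq0 leqNgt hm.
- have -> : 2 ^ m = 2 ^ k * (2 * 2 ^ (m - k).-1).
    by rewrite -expnS prednK ?subn_gt0 // -expnD subnKC // ltnW.
  rewrite !divnMA addnC -{1}(mul1n (2 ^ k)) divnMDl ?expn_gt0 //.
  set a := r %/ 2 ^ k in h *.
  suff -> : (1 + a) %/ 2 = a %/ 2 by [].
  have : a %% 2 = 0 by rewrite modn2 h.
  lia.
Qed.

Definition toggle k r := if bit k r then r - 2 ^ k else r + 2 ^ k.

Lemma toggle_spec k r : bit k r -> exists2 r', ~~ bit k r' & r = r' + 2 ^ k.
Proof.
move=> h; have le_k_r : 2 ^ k <= r.
  by rewrite leqNgt; apply: contraL h => /divn_small; rewrite /bit => ->.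
exists (r - 2 ^ k); last by rewrite subnK.
by move: h; rewrite -{1}(subnK le_k_r) bit_addX.
Qed.

Lemma bit_toggle k m r : bit m (toggle k r) = (m == k) (+) bit m r.
Proof.
rewrite /toggle; case: ifP => [/toggle_spec [r' hr' ->] | /negbT h].
  rewrite addnK; case: eqVneq => [->|hmk]; first by rewrite bit_addX (negPf hr').
  by rewrite bit_addX_neq.
by case: eqVneq => [->|hmk]; rewrite ?bit_addX ?bit_addX_neq.
Qed.

Lemma toggleK k : involutive (toggle k).
Proof.
move=> r; rewrite {2}/toggle; case: ifP => [/toggle_spec [r' hr' ->]|h].
  by rewrite addnK /toggle (negPf hr').
by rewrite /toggle bit_addX h addnK.
Qed.

Lemma toggle_lt k n r : k < n -> r < 2 ^ n -> toggle k r < 2 ^ n.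
Proof.
rewrite /toggle => lt_k_n lt_r; case: ifP => [_|/negbT h].
  exact: leq_ltn_trans (leq_subr _ _) lt_r.
have hP : 0 < 2 ^ k by rewrite expn_gt0.
have eN : 2 ^ n = 2 ^ (n - k) * 2 ^ k by rewrite -expnD subnK // ltnW.
have hq : r %/ 2 ^ k < 2 ^ (n - k) by rewrite ltn_divLR // -eN.
have even_N : ~~ odd (2 ^ (n - k)) by rewrite oddX subn_eq0 orbF -ltnNge.
have hq1 : (r %/ 2 ^ k).+1 < 2 ^ (n - k).
  rewrite ltn_neqAle hq andbT; apply: contraNneq even_N => <-; exact: h.
have hu : r %% 2 ^ k < 2 ^ k by rewrite ltn_mod.
have : (r %/ 2 ^ k).+2 * 2 ^ k <= 2 ^ (n - k) * 2 ^ k by rewrite leq_mul2r hq1 orbT.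
rewrite eN {1}(divn_eq r (2 ^ k)) !mulSn; lia.
Qed.

End Bits.

Local Open Scope ring_scope.

Section RankOfColumns.
Variable F : fieldType.

Lemma rank_cols_sub m n1 n2 (A : 'M[F]_(m, n1)) (B : 'M[F]_(m, n2)) :
  (forall b, exists a, col b B = col a A) -> (\rank B <= \rank A)%N.
Proof.
move=> colsB; rewrite -mxrank_tr -[\rank A]mxrank_tr; apply: mxrankS.
apply/row_subP => b; have [a colb] := colsB b.
by rewrite -tr_col colb tr_col row_sub.
Qed.

End RankOfColumns.

Section ExponentVectors.
Variable L : nat.
Implicit Types x y : {ffun 'I_L -> bool}.

(* X_{t+1} negates exactly the rows whose binary digit of weight 2^(L - t.+1) is set. *)
Definition bitpos (t : 'I_L) := (L - t.+1)%N.

Lemma bitpos_inj : injective bitpos.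
Proof.
move=> s t; rewrite /bitpos => h; apply/val_inj => /=.
by move: h; have := ltn_ord s; have := ltn_ord t; lia.
Qed.

Lemma bitpos_lt t : (bitpos t < L)%N.
Proof. by rewrite /bitpos; have := ltn_ord t; lia. Qed.

Definition xorv x y : {ffun 'I_L -> bool} := [ffun t => x t (+) y t].
Definition unitv (j : 'I_L) : {ffun 'I_L -> bool} := [ffun t => t == j].
Definition zerov : {ffun 'I_L -> bool} := [ffun => false].

Definition flip j x := xorv x (unitv j).

Lemma flipE j x t : flip j x t = x t (+) (t == j).
Proof. by rewrite !ffunE. Qed.

Lemma flipK j : involutive (flip j).
Proof. by move=> x; apply/ffunP => t; rewrite !flipE -addbA addbb addbF. Qed.

Definition zero_at (i : 'I_L) := [set x : {ffun 'I_L -> bool} | ~~ x i].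

Lemma card_zero_at i : #|zero_at i| = (2 ^ L %/ 2)%N.
Proof.
have compl : ~: zero_at i = flip i @: zero_at i.
  rewrite (can2_imset_pre _ (flipK i) (flipK i)); apply/setP => x.
  by rewrite !inE flipE eqxx addbT negbK.
have := cardsC (zero_at i); rewrite compl card_imset; last exact: can_inj (flipK i).
by rewrite card_ffun card_bool card_ord => <-; rewrite addnn -muln2 mulnK.
Qed.

Lemma flip_zero_at i j : i != j -> flip j @: zero_at i = zero_at i.
Proof.
move=> /negPf neq_ij; rewrite (can2_imset_pre _ (flipK j) (flipK j)).
by apply/setP => x; rewrite !inE flipE neq_ij addbF.
Qed.

Lemma zero_atU_flip i : zero_at i :|: flip i @: zero_at i = setT.
Proof.
rewrite (can2_imset_pre _ (flipK i) (flipK i)).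
by apply/setP => x; rewrite !inE flipE eqxx addbT negbK orNb.
Qed.

End ExponentVectors.

Arguments zerov {L}.
Arguments bitpos_inj {L}.

Section Characters.
Variables (F : fieldType) (L : nat).
Implicit Types (x y z : {ffun 'I_L -> bool}) (r : nat).

Definition chi x r : F := \prod_(t < L) (-1) ^+ (x t && bit (bitpos t) r).

Lemma prod_sign_supp1 s (f : 'I_L -> bool) :
  (forall t, t != s -> f t = false) -> \prod_(t < L) (-1) ^+ f t = (-1) ^+ f s :> F.
Proof. by move=> f0; rewrite (bigD1 s) //= big1 ?mulr1 // => t /f0 ->. Qed.

Lemma chiM x y r : chi x r * chi y r = chi (xorv x y) r.
Proof.
rewrite /chi -big_split; apply: eq_bigr => t _ /=.
by rewrite ffunE -signr_addb; case: (x t); case: (y t); case: bit.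
Qed.

Lemma chi0 r : chi zerov r = 1.
Proof. by rewrite /chi big1 // => t _; rewrite ffunE. Qed.

Lemma chi_unitv j r : chi (unitv j) r = (-1) ^+ bit (bitpos j) r.
Proof.
rewrite /chi (@prod_sign_supp1 j) ?ffunE ?eqxx // => t /negPf.
by rewrite ffunE => ->.
Qed.

Lemma chi_toggle z s r : z s -> chi z (toggle (bitpos s) r) = - chi z r.
Proof.
move=> zs; have sign_s : \prod_(t < L) (-1) ^+ (t == s) = -1 :> F.
  by rewrite (@prod_sign_supp1 s (eq_op^~ s)) ?eqxx // => t /negPf.
rewrite -mulN1r -sign_s /chi -big_split; apply: eq_bigr => t _ /=.
rewrite bit_toggle (inj_eq bitpos_inj) -signr_addb.
by case: eqVneq => [->|_]; rewrite ?zs.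
Qed.

Hypothesis char_neq2 : (2 \notin [pchar F])%N.

Lemma two_neq0 : 2%:R != 0 :> F.
Proof. by move: char_neq2; rewrite inE. Qed.

Lemma sum_chi z : z != zerov -> \sum_(r < 2 ^ L) chi z r = 0.
Proof.
move=> nz_z; have [s zs] : exists s, z s.
  apply/existsP; apply: contraR nz_z => /existsPn z0.
  by apply/eqP/ffunP => t; rewrite ffunE; apply/negbTE.
pose tg (r : 'I_(2 ^ L)) := Ordinal (toggle_lt (bitpos_lt s) (ltn_ord r)).
have tg_inj : injective tg.
  by move=> a b /(congr1 (toggle (bitpos s) \o val)) /=; rewrite !toggleK => /val_inj.
have : \sum_(r < 2 ^ L) chi z r = - \sum_(r < 2 ^ L) chi z r.
  by rewrite {1}(reindex_inj tg_inj) -sumrN; apply: eq_bigr => r _; exact: chi_toggle.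
move/eqP; rewrite -subr_eq0 opprK -mulr2n -mulr_natr mulf_eq0 (negPf two_neq0) orbF.
exact/eqP.
Qed.

Lemma chi_orthogonal x y :
  \sum_(r < 2 ^ L) chi x r * chi y r = (x == y)%:R * (2 ^ L)%:R.
Proof.
under eq_bigr => r _ do rewrite chiM.
case: eqVneq => [<-|neq_xy].
  have -> : xorv x x = zerov by apply/ffunP => t; rewrite !ffunE addbb.
  by under eq_bigr => r _ do rewrite chi0; rewrite sumr_const card_ord mul1r.
rewrite sum_chi ?mul0r //; apply/eqP => xy0; case/eqP: neq_xy; apply/ffunP => t.
by have := congr1 (fun v : {ffun _ -> _} => v t) xy0; rewrite !ffunE; case: (x t); case: (y t).
Qed.

Lemma Xmx_diag t : Xmx F t = diag_mx (\row_(r < 2 ^ L) (-1) ^+ bit (bitpos t) r).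
Proof.
apply/matrixP => r c; rewrite !mxE -expnB ?ltn_ord // -expnS -bitE.
by case: eqVneq => [->|_]; case: bit; rewrite ?mulr1n ?mulr0n.
Qed.

Lemma big_mulmx_diag n I (s : seq I) (d : I -> 'rV[F]_n) :
  \big[mulmx/1%:M]_(i <- s) diag_mx (d i) = diag_mx (\row_j \prod_(i <- s) d i 0 j).
Proof.
elim: s => [|i s IH].
  by rewrite !big_nil -diag_const_mx; congr diag_mx; apply/matrixP => ? j; rewrite !mxE big_nil.
rewrite !big_cons IH mulmx_diag; congr diag_mx.
by apply/matrixP => ? j; rewrite !mxE big_cons.
Qed.

Lemma colvecE x : colvec F x = \col_(r < 2 ^ L) chi x r.
Proof.
have factorE t : (if x t then Xmx F t else 1%:M) =
                 diag_mx (\row_(r < 2 ^ L) (-1) ^+ (x t && bit (bitpos t) r)).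
  case: (x t); first by rewrite Xmx_diag.
  by rewrite -diag_const_mx; congr diag_mx; apply/matrixP => ? r; rewrite !mxE.
rewrite /colvec (eq_bigr _ (fun t _ => factorE t)) big_mulmx_diag mul_diag_mx.
by apply/matrixP => r c; rewrite !mxE mulr1; apply: eq_bigr => t _; rewrite mxE.
Qed.

Lemma colvec_inj : injective (@colvec F L).
Proof.
move=> x y exy; have chi_xy (r : 'I_(2 ^ L)) : chi x r = chi y r.
  by have := congr1 (fun v : 'cV_(2 ^ L) => v r ord0) exy; rewrite !colvecE !mxE.
have := chi_orthogonal x x; under eq_bigr => r _ do rewrite {2}chi_xy.
rewrite chi_orthogonal eqxx; case: eqP => // _ /eqP.
by rewrite mul0r mul1r eq_sym natrX expf_eq0 (negPf two_neq0) andbF.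
Qed.

Section ExponentMatrix.
Variables (m : nat) (e : 'I_m -> {ffun 'I_L -> bool}).

Lemma col_mx_of_exps c : col c (mx_of_exps F e) = colvec F (e c).
Proof. by apply/matrixP => r k; rewrite (ord1 k) !mxE. Qed.

Lemma mx_of_expsE : mx_of_exps F e = \matrix_(r, c) chi (e c) r.
Proof. by apply/matrixP => r c; rewrite [LHS]mxE colvecE !mxE. Qed.

Lemma lattice_mx_of_exps : lattice (mx_of_exps F e) = [set e c | c : 'I_m].
Proof.
apply/setP => x; rewrite inE; apply/existsP/imsetP => [[c]|[c _ ->]].
  by rewrite col_mx_of_exps => /eqP/colvec_inj <-; exists c.
by exists c; rewrite col_mx_of_exps.
Qed.

Lemma rank_mx_of_exps_inj : injective e -> \rank (mx_of_exps F e) = m.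
Proof.
move=> e_inj; set A := mx_of_exps F e.
have gram : A^T *m A = (2 ^ L)%:R%:M.
  apply/matrixP => a b; rewrite /A mx_of_expsE !mxE.
  under eq_bigr => r _ do rewrite !mxE.
  by rewrite chi_orthogonal (inj_eq e_inj) mulr_natl.
apply/eqP; rewrite eqn_leq rank_leq_col /=.
have := mxrankM_maxr A^T A.
by rewrite gram -scalemx1 mxrank_scale_nz ?mxrank1 // natrX expf_neq0 ?two_neq0.
Qed.

End ExponentMatrix.

Lemma Xmx_mx_of_exps j m (e : 'I_m -> {ffun 'I_L -> bool}) :
  Xmx F j *m mx_of_exps F e = mx_of_exps F (fun c => flip j (e c)).
Proof.
rewrite Xmx_diag mul_diag_mx !mx_of_expsE; apply/matrixP => r c.
by rewrite !mxE -chiM chi_unitv mulrC.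
Qed.

Lemma lattice_row_mx n1 n2 (A : 'M[F]_(2 ^ L, n1)) (B : 'M[F]_(2 ^ L, n2)) :
  lattice (row_mx A B) = lattice A :|: lattice B.
Proof.
apply/setP => x; rewrite !inE; apply/existsP/orP => [[c]|[]/existsP[c colc]].
- by rewrite -(splitK c); case: (split c) => a /=; rewrite ?colKl ?colKr => colc;
    [left|right]; apply/existsP; exists a.
- by exists (lshift n2 c); rewrite colKl.
- by exists (rshift n1 c); rewrite colKr.
Qed.

Lemma rank_eq_card_lattice n (A : 'M[F]_(2 ^ L, n)) :
  (forall c, exists x, col c A = colvec F x) -> \rank A = #|lattice A|.
Proof.
move=> colsA; set T := lattice A.
pose B := mx_of_exps F (@enum_val _ (mem T)).
have <- : \rank B = #|T| by apply: rank_mx_of_exps_inj; exact: enum_val_inj.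
apply/eqP; rewrite eqn_leq; apply/andP; split; apply: rank_cols_sub.
- move=> c; have [x colc] := colsA c.
  have xT : x \in T by rewrite inE; apply/existsP; exists c; rewrite colc.
  by exists (enum_rank_in xT x); rewrite col_mx_of_exps enum_rankK_in ?colc.
- move=> k; have /[!inE] /existsP[c /eqP colc] := enum_valP k.
  by exists c; rewrite col_mx_of_exps.
Qed.

End Characters.

Theorem lemma2 (F : finFieldType) (hF : (2 \notin [pchar F])%N) (L : nat) (hL : (1 <= L)%N)
  (i j : 'I_L) (e : 'I_(2 ^ L %/ 2) -> {ffun 'I_L -> bool})
  (he_inj : injective e) (he_i : forall c, e c i = false) :
  let V := mx_of_exps F e in
  let XV := Xmx F j *m V in
  \rank (row_mx V XV) = #|lattice V :|: lattice XV| /\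
  #|lattice V :|: lattice XV| = (if i == j then 2 ^ L else 2 ^ L %/ 2)%N.
Proof.
(* hL is implied by the existence of i : 'I_L. *)
move=> V XV; rewrite -lattice_row_mx; split.
  apply: (rank_eq_card_lattice hF) => c; rewrite -(splitK c).
  case: (split c) => a /=; rewrite ?colKl ?colKr /XV ?Xmx_mx_of_exps;
    by eexists; apply: col_mx_of_exps.
have imgE : [set e c | c : 'I_(2 ^ L %/ 2)] = zero_at i.
  apply/eqP; rewrite eqEcard card_imset // card_ord card_zero_at leqnn andbT.
  by apply/subsetP => _ /imsetP[c _ ->]; rewrite inE he_i.
rewrite lattice_row_mx /XV Xmx_mx_of_exps !lattice_mx_of_exps //.
rewrite (imset_comp (flip j) e) imgE; case: eqVneq => [<-|neq_ij].
  by rewrite zero_atU_flip cardsT card_ffun card_bool card_ord.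
by rewrite flip_zero_at // setUid card_zero_at.
Qed.
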